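(* If a closure model $\mathcal{M}=((X,\mathcal{C}_R),\mathcal{V})$ is quasi-discrete, finitely closed and finitely backward closed, then for all $x_1,x_2\in X$: $x_1\simeq x_2$ iff $x_1$ and $x_2$ satisfy exactly the same $\mathrm{SLCS}^-$ formulas.
   Context: $\mathcal{C}_R(A)=A\cup\{x\mid\exists a\in A.\ aRx\}$, $\vec{\mathcal{C}}(x)=\mathcal{C}_R(\{x\})$, $\overleftarrow{\mathcal{C}}(x)=\mathcal{C}_{R^{-1}}(\{x\})$, $\mathcal{V}:AP\to\mathcal{P}(X)$, $\mathcal{V}^{-1}(x)=\{p\mid x\in\mathcal{V}(p)\}$; finitely (backward) closed: all $\vec{\mathcal{C}}(x)$ (resp. $\overleftarrow{\mathcal{C}}(x)$) finite. Path: $\pi:\mathbb{N}\to X$ with $\pi[\mathcal{C}_{succ}(N)]\subseteq\mathcal{C}_R(\pi[N])$ for all $N$, $\mathcal{C}_{succ}$ based on $n\mapsto n+1$. $x\models\vec\rho\,\Phi_1[\Phi_2]$ iff some path $\pi$ and $\ell$ have $\pi(0)=x$, $\pi(\ell)\models\Phi_1$, $\pi(j)\models\Phi_2$ for $0<j<\ell$; $x\models\overleftarrow\rho\,\Phi_1[\Phi_2]$ iff some path $\pi$ and $\ell$ have $\pi(\ell)=x$, $\pi(0)\models\Phi_1$, $\pi(j)\models\Phi_2$ for $0<j<\ell$. $\bot=p\land\neg p$. $\mathrm{SLCS}^-$: $\Phi::=p\mid\neg\Phi\mid\Phi\lor\Phi\mid\vec\rho\,\Phi[\bot]\mid\overleftarrow\rho\,\Phi[\bot]$.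 $\simeq$: union of all non-empty equivalence relations $B$ with $(x_1,x_2)\in B\Rightarrow\mathcal{V}^{-1}(x_1)=\mathcal{V}^{-1}(x_2)$ and for all $C\in X/B$, $\vec{\mathcal{C}}(x_1)\cap C\neq\emptyset\iff\vec{\mathcal{C}}(x_2)\cap C\neq\emptyset$ and $\overleftarrow{\mathcal{C}}(x_1)\cap C\neq\emptyset\iff\overleftarrow{\mathcal{C}}(x_2)\cap C\neq\emptyset$. *)

From Stdlib Require Import Ensembles Finite_sets PeanoNat.

Set Implicit Arguments.

Section Defs.
Variables (X AP : Type) (R : X -> X -> Prop).

Definition CR (A : X -> Prop) : X -> Prop :=
  fun x => A x \/ exists a, A a /\ R a x.

Definition CRinv (A : X -> Prop) : X -> Prop :=
  fun x => A x \/ exists a, A a /\ R x a.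

Definition fwdC (x : X) : X -> Prop := CR (fun y => y = x).
Definition bwdC (x : X) : X -> Prop := CRinv (fun y => y = x).

Definition fin_closed : Prop := forall x, Finite X (fwdC x).
Definition fin_bclosed : Prop := forall x, Finite X (bwdC x).

Definition Csucc (N : nat -> Prop) : nat -> Prop :=
  fun n => N n \/ exists m, N m /\ n = S m.

Definition image (pi : nat -> X) (N : nat -> Prop) : X -> Prop :=
  fun x => exists m, N m /\ pi m = x.

Definition is_path (pi : nat -> X) : Prop :=
  forall (N : nat -> Prop) (x : X), image pi (Csucc N) x -> CR (image pi N) x.

End Defs.

(* Syntax of SLCS^- :  Φ ::= p | ¬Φ | Φ ∨ Φ | ρ→ Φ[⊥] | ρ← Φ[⊥] *)
Inductive slcsm (AP : Type) : Type :=
| SAtom : AP -> slcsm AP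
| SNeg : slcsm AP -> slcsm AP
| SOr : slcsm AP -> slcsm AP -> slcsm AP
| SRhoF : slcsm AP -> slcsm AP
| SRhoB : slcsm AP -> slcsm AP.

Arguments SAtom {AP}.
Arguments SNeg {AP}.
Arguments SOr {AP}.
Arguments SRhoF {AP}.
Arguments SRhoB {AP}.

(* satisfaction; ⊥ = p ∧ ¬p is satisfied by no point, so the guard
   "π(j) ⊨ ⊥ for 0 < j < ℓ" is rendered as "False for 0 < j < ℓ". *)
Fixpoint sat (X AP : Type) (R : X -> X -> Prop) (V : AP -> X -> Prop)
  (phi : slcsm AP) (x : X) : Prop :=
  match phi with
  | SAtom p => V p x
  | SNeg f => ~ sat R V f x
  | SOr f g => sat R V f x \/ sat R V g x
  | SRhoF f => exists (pi : nat -> X) (l : nat),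
      is_path R pi /\ pi 0 = x /\ sat R V f (pi l) /\
      (forall j, 0 < j < l -> False)
  | SRhoB f => exists (pi : nat -> X) (l : nat),
      is_path R pi /\ pi l = x /\ sat R V f (pi 0) /\
      (forall j, 0 < j < l -> False)
  end.

(* B is a CM-bisimulation condition, for an equivalence relation B;
   the classes of X/B are the sets {w | B z w}. *)
Definition bisim_cond (X AP : Type) (R : X -> X -> Prop) (V : AP -> X -> Prop)
  (B : X -> X -> Prop) : Prop :=
  forall x1 x2, B x1 x2 ->
    (forall p, V p x1 <-> V p x2) /\
    (forall z, (exists w, fwdC R x1 w /\ B z w) <-> (exists w, fwdC R x2 w /\ B z w)) /\
    (forall z, (exists w, bwdC R x1 w /\ B z w) <-> (exists w, bwdC R x2 w /\ B z w)).

Definition cm_bisim (X AP : Type) (R : X -> X -> Prop) (V : AP -> X -> Prop)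
  (x1 x2 : X) : Prop :=
  exists B : X -> X -> Prop,
    (exists a b, B a b) /\
    (forall a, B a a) /\ (forall a b, B a b -> B b a) /\
    (forall a b c, B a b -> B b c -> B a c) /\
    bisim_cond R V B /\ B x1 x2.

(* On a quasi-discrete closure model the reachability operators of SLCS^-
   with guard ⊥ only look one step ahead: a path whose intermediate points
   all satisfy ⊥ has length at most one, so ρ→ Φ[⊥] holds at x iff Φ holds
   somewhere in the forward closure of x, and dually for ρ← with the
   backward closure.  With these one-step readings the theorem is a
   Hennessy-Milner argument:
   - soundness: by induction on formulas, any bisimulation (an equivalence
     satisfying the transfer conditions) relates only logically equivalent
     points;
   - completeness: logical equivalence is itself such an equivalence.  The
     transfer conditions hold because each closure is finite: if no point
     of the closure of x2 were equivalent to z, a finite conjunction of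
     distinguishing formulas would separate z from that whole closure, and
     its ρ-modality would then distinguish x1 from x2. *)

From Stdlib Require Import Ensembles Finite_sets Classical Lia.

Set Implicit Arguments.

Section Model.
Variables (X AP : Type) (R : X -> X -> Prop) (V : AP -> X -> Prop).

Notation sat := (sat R V).

Lemma fwdC_refl x : fwdC R x x.
Proof. left. reflexivity. Qed.

Lemma bwdC_refl x : bwdC R x x.
Proof. left. reflexivity. Qed.

Lemma bwdC_fwdC x y : bwdC R x y <-> fwdC R y x.
Proof.
  unfold bwdC, fwdC, CR, CRinv. split.
  - intros [-> | (a & -> & Hr)]; [left | right; exists y]; auto.
  - intros [-> | (a & -> & Hr)]; [left | right; exists x]; auto.
Qed.

Lemma path_first_step pi : is_path R pi -> fwdC R (pi 0) (pi 1).
Proof.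
  intros Hp.
  assert (Hc : CR R (image pi (fun m => m = 0)) (pi 1)).
  { apply Hp. exists 1. split; [right; exists 0|]; auto. }
  destruct Hc as [(m & -> & <-) | (a & (m & -> & <-) & Hr)].
  - apply fwdC_refl.
  - right. exists (pi 0). auto.
Qed.

Definition two_step (x y : X) : nat -> X :=
  fun n => match n with 0 => x | _ => y end.

Lemma two_step_path x y : fwdC R x y -> is_path R (two_step x y).
Proof.
  intros Hxy N z (m & [Hm | (k & Hk & ->)] & <-).
  - left. exists m. auto.
  - destruct k as [|k].
    + destruct Hxy as [-> | (a & -> & Hr)].
      * left. exists 0. auto.
      * right. exists x. split; [exists 0|]; auto.
    + left. exists (S k). auto.
Qed.

(* A path whose intermediate points satisfy ⊥ has length at most one, so
   its endpoints are exactly the pairs related by the forward closure. *)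
Lemma bot_guarded_path a b :
  (exists pi l, is_path R pi /\ pi 0 = a /\ pi l = b /\
                (forall j, 0 < j < l -> False)) <-> fwdC R a b.
Proof.
  split.
  - intros (pi & l & Hp & <- & <- & Hl).
    destruct l as [|[|l]].
    + apply fwdC_refl.
    + apply path_first_step. exact Hp.
    + exfalso. apply (Hl 1). lia.
  - intros Hab. exists (two_step a b), 1.
    repeat split; auto using two_step_path. intros j Hj. lia.
Qed.

Lemma sat_rhoF f x : sat (SRhoF f) x <-> exists y, fwdC R x y /\ sat f y.
Proof.
  simpl. split.
  - intros (pi & l & Hp & H0 & Hf & Hl). exists (pi l). split; auto.
    apply bot_guarded_path. exists pi, l. auto.
  - intros (y & Hy & Hf).
    destruct (proj2 (bot_guarded_path x y) Hy) as (pi & l & Hp & H0 & Hl & Hg).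
    exists pi, l. rewrite Hl. auto.
Qed.

Lemma sat_rhoB f x : sat (SRhoB f) x <-> exists y, bwdC R x y /\ sat f y.
Proof.
  simpl. split.
  - intros (pi & l & Hp & Hl & Hf & Hg). exists (pi 0). split; auto.
    apply bwdC_fwdC, bot_guarded_path. exists pi, l. auto.
  - intros (y & Hy & Hf).
    apply bwdC_fwdC in Hy.
    destruct (proj2 (bot_guarded_path y x) Hy) as (pi & l & Hp & H0 & Hl & Hg).
    exists pi, l. rewrite H0. auto.
Qed.

Lemma bisim_transfers_diamond (B C : X -> X -> Prop) (f : slcsm AP) x1 x2 :
  (forall a, B a a) ->
  (forall a b, B a b -> (sat f a <-> sat f b)) ->
  (forall z, (exists w, C x1 w /\ B z w) -> (exists w, C x2 w /\ B z w)) ->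
  (exists y, C x1 y /\ sat f y) -> exists y, C x2 y /\ sat f y.
Proof.
  intros Hrefl Hf Htr (y & Hy & Hsat).
  destruct (Htr y (ex_intro _ y (conj Hy (Hrefl y)))) as (w & Hw & Hyw).
  exists w. split; auto. apply (Hf y w Hyw). exact Hsat.
Qed.

Lemma bisim_preserves_sat (B : X -> X -> Prop) :
  (forall a, B a a) -> bisim_cond R V B ->
  forall phi a b, B a b -> (sat phi a <-> sat phi b).
Proof.
  intros Hrefl Hcond phi.
  induction phi as [p | f IH | f IHf g IHg | f IH | f IH]; intros a b Hab;
    destruct (Hcond a b Hab) as (Hatoms & Hfwd & Hbwd).
  - apply Hatoms.
  - simpl. rewrite (IH a b Hab). tauto.
  - simpl. rewrite (IHf a b Hab), (IHg a b Hab). tauto.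
  - rewrite !sat_rhoF.
    split; apply (bisim_transfers_diamond B); auto; apply Hfwd.
  - rewrite !sat_rhoB.
    split; apply (bisim_transfers_diamond B); auto; apply Hbwd.
Qed.

Definition log_equiv (a b : X) : Prop := forall phi, sat phi a <-> sat phi b.

(* Classically, inequivalent points are told apart by a formula true at
   the first one (using negation if needed). *)
Lemma distinguishing_formula a b :
  ~ log_equiv a b -> exists phi, sat phi a /\ ~ sat phi b.
Proof.
  intros Hne. apply NNPP. intros Hno. apply Hne. intros phi.
  split; intros Hs; apply NNPP; intros Hn; apply Hno.
  - exists phi. auto.
  - exists (SNeg phi). simpl. auto.
Qed.

Definition SAnd (f g : slcsm AP) : slcsm AP := SNeg (SOr (SNeg f) (SNeg g)).

Lemma sat_and f g x : sat (SAnd f g) x <-> sat f x /\ sat g x.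
Proof.
  simpl. split.
  - intros H. split; apply NNPP; intros Hn; apply H; auto.
  - intros [Hf Hg] [Hn | Hn]; auto.
Qed.

Lemma separate_finite (C : Ensemble X) z :
  Finite X C ->
  (forall w, C w -> exists phi, sat phi z /\ ~ sat phi w) ->
  (forall w, ~ C w) \/
  exists phi, sat phi z /\ forall w, C w -> ~ sat phi w.
Proof.
  intros HC. induction HC as [|A HA IH x Hx]; intros Hsep.
  - left. intros w [].
  - destruct (Hsep x (Union_intror _ _ _ _ (In_singleton _ x)))
      as (psi & Hz & Hx_psi).
    right. destruct IH as [Hempty | (phi & Hphi & HA_phi)].
    + intros w Hw. apply Hsep. left. exact Hw.
    + exists psi. split; auto.
      intros w [w' Hw | w' Hw].
      * destruct (Hempty w' Hw).
      * destruct Hw. exact Hx_psi.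
    + exists (SAnd phi psi). split; [apply sat_and; auto|].
      intros w Hw Hs. apply sat_and in Hs as [H1 H2].
      destruct Hw as [w' Hw | w' Hw].
      * exact (HA_phi w' Hw H1).
      * destruct Hw. exact (Hx_psi H2).
Qed.

Lemma log_equiv_transfers (C : X -> X -> Prop) (M : slcsm AP -> slcsm AP) :
  (forall f x, sat (M f) x <-> exists y, C x y /\ sat f y) ->
  (forall x, Finite X (C x)) -> (forall x, C x x) ->
  forall x1 x2, log_equiv x1 x2 -> forall z,
  (exists w, C x1 w /\ log_equiv z w) -> (exists w, C x2 w /\ log_equiv z w).
Proof.
  intros HM Hfin Hrefl x1 x2 H12 z (w & Hw & Hzw).
  apply NNPP. intros Hno.
  destruct (separate_finite z (Hfin x2)) as [Hempty | (phi & Hz & Hsep)].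
  - intros w' Hw'. apply distinguishing_formula. intros Hzw'.
    apply Hno. eauto.
  - exact (Hempty x2 (Hrefl x2)).
  - assert (Hx1 : sat (M phi) x1).
    { apply HM. exists w. split; auto. apply Hzw. exact Hz. }
    apply H12, HM in Hx1 as (y & Hy & Hphi).
    exact (Hsep y Hy Hphi).
Qed.

Lemma log_equiv_sym a b : log_equiv a b -> log_equiv b a.
Proof. intros H phi. symmetry. apply H. Qed.

Lemma log_equiv_bisim_cond :
  fin_closed R -> fin_bclosed R -> bisim_cond R V log_equiv.
Proof.
  intros HF HB a b Hab.
  pose proof (log_equiv_sym Hab) as Hba.
  split; [|split]; [intros p; exact (Hab (SAtom p)) | intros z; split ..].
  - apply (log_equiv_transfers _ _ sat_rhoF HF fwdC_refl Hab).
  - apply (log_equiv_transfers _ _ sat_rhoF HF fwdC_refl Hba).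
  - apply (log_equiv_transfers _ _ sat_rhoB HB bwdC_refl Hab).
  - apply (log_equiv_transfers _ _ sat_rhoB HB bwdC_refl Hba).
Qed.

End Model.

Theorem theorem3 (X AP : Type) (R : X -> X -> Prop) (V : AP -> X -> Prop) :
  fin_closed R -> fin_bclosed R ->
  forall x1 x2 : X,
    cm_bisim R V x1 x2 <-> (forall phi : slcsm AP, sat R V phi x1 <-> sat R V phi x2).
Proof.
  intros HF HB x1 x2. split.
  - intros (B & _ & Hrefl & _ & _ & Hcond & H12).
    intros phi. exact (bisim_preserves_sat Hrefl Hcond phi x1 x2 H12).
  - intros H12. exists (log_equiv R V).
    split; [exists x1, x1; intros phi; reflexivity|].
    split; [intros a phi; reflexivity|].
    split; [apply log_equiv_sym|].
    split; [intros a b c Hab Hbc phi; rewrite (Hab phi); apply Hbc|].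
    split; [apply log_equiv_bisim_cond; assumption | exact H12].
Qed.
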